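(* Let $\mathcal{S}$ be an instance space, $\mathcal{W}$ a hypothesis space, and $\ell:\mathcal{S}\times\mathcal{W}\to\mathbb{R}^+$ a nonnegative loss. Consider a distributed learning problem with $K$ users: for each $k\in\{1,\ldots,K\}$, user $k$ holds a dataset $\mathbf{S}_k=(S_{k,1},\ldots,S_{k,n_k})$ with law $\pi_k^{\otimes n_k}$ for an (unknown) distribution $\pi_k$ on $\mathcal{S}$, the datasets $\mathbf{S}_1,\ldots,\mathbf{S}_K$ being independent; user $k$ outputs $W_k\in\mathcal{W}$ according to a conditional distribution $P_{W_k|\mathbf{S}_k}$, and a fusion algorithm outputs $\widehat W\in\mathcal{W}$ according to $P_{\widehat W|W_1,\ldots,W_K}$. Denote this distributed learning algorithm by $\mathcal{A}_K$, let $n=\sum_{k=1}^K n_k$, $\mu=\prod_{k=1}^K\pi_k$, and let $P_{\widehat W}$ be the marginal law of $\widehat W$. For each $k$, let $(\bar S_k,\bar W)\sim\pi_k\otimes P_{\widehat W}$ (independent), let $\Lambda_k(\lambda)$ be the cumulant generating function of $\ell(\bar S_k,\bar W)$, i.e. $\Lambda_k(\lambda)=\log\mathbb{E}\big[e^{\lambda(\ell(\bar S_k,\bar W)-\mathbb{E}[\ell(\bar S_k,\bar W)])}\big]$, and suppose there are $b_{k\pm}\in(0,\infty]$ and convex functions $\psi_{k\pm}:[0,b_{k\pm})\to\mathbb{R}$ with $\psi_{k\pm}(0)=\psi_{k\pm}'(0)=0$ such that $\Lambda_k(\lambda)\le\psi_{k+}(\lambda)$ for $\lambda\in[0,b_{k+})$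 and $\Lambda_k(\lambda)\le\psi_{k-}(-\lambda)$ for $\lambda\in(-b_{k-},0]$. Then \[ -\frac1n\sum_{k=1}^K\sum_{i=1}^{n_k}\psi_{k+}^{\ast-1}\big(I(S_{k,i};\widehat W)\big)\;\le\;{\rm gen}(\mu;\mathcal{A}_K)\;\le\;\frac1n\sum_{k=1}^K\sum_{i=1}^{n_k}\psi_{k-}^{\ast-1}\big(I(S_{k,i};\widehat W)\big). \]
   Context: For $w\in\mathcal{W}$, $L_{\pi_k}(w)=\mathbb{E}_{S\sim\pi_k}[\ell(S,w)]$ and $L_{\mathbf{S}_k}(w)=\frac1{n_k}\sum_{i=1}^{n_k}\ell(S_{k,i},w)$. The distributed expected risk is $L_\mu(w)=\sum_{k=1}^K\frac{n_k}{n}L_{\pi_k}(w)$, the distributed empirical risk is $L_{\mathbf{S}_K}(w)=\sum_{k=1}^K\frac{n_k}{n}L_{\mathbf{S}_k}(w)$, and the expected generalization error is ${\rm gen}(\mu;\mathcal{A}_K)=\mathbb{E}[L_\mu(\widehat W)-L_{\mathbf{S}_K}(\widehat W)]$. $I(\cdot;\cdot)$ is mutual information. For a convex $\psi:[0,b)\to\mathbb{R}$, $\psi^\ast(x)=\sup_{\lambda\in[0,b)}(\lambda x-\psi(\lambda))$ is its Legendre dual and $\psi^{\ast-1}$ the inverse of $\psi^\ast$ (on $[0,\infty)$). *)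

From HB Require Import structures.
From mathcomp Require Import all_boot all_order all_algebra.
From mathcomp Require Import all_classical all_reals all_analysis.
Set Implicit Arguments. Unset Strict Implicit. Unset Printing Implicit Defensive.
Import Order.TTheory GRing.Theory Num.Theory.
Local Open Scope classical_set_scope.
Local Open Scope ring_scope.

Section pairRV.
Context d d1 d2 (T : measurableType d) (T1 : measurableType d1)
  (T2 : measurableType d2).
Variables (X : {mfun T >-> T1}) (Y : {mfun T >-> T2}).
Definition pairRV : T -> T1 * T2 := fun t => (X t, Y t).
Lemma pairRV_measurable : measurable_fun setT pairRV.
Proof. exact: measurable_fun_pair. Qed.
HB.instance Definition _ :=
  isMeasurableFun.Build _ _ _ _ pairRV pairRV_measurable.
End pairRV.

Local Open Scope ereal_scope.

Definition KL (R : realType) d (T : measurableType d) (P Q : probability T R)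
  : \bar R :=
  if pselect (P `<< Q) then
    \int[P]_x lne (Radon_Nikodym_SigmaFinite.f P Q x)
  else +oo.

Definition mutual_info (R : realType) d d1 d2 (T : measurableType d)
  (T1 : measurableType d1) (T2 : measurableType d2) (P : probability T R)
  (X : {mfun T >-> T1}) (Y : {mfun T >-> T2}) : \bar R :=
  KL (distribution P (pairRV X Y))
     ((distribution P X \x distribution P Y)%E : probability _ R).

Definition cgf (R : realType) d (T : measurableType d) (Q : probability T R)
  (f : T -> R) (l : R) : \bar R :=
  lne (\int[Q]_z (expR (l * (f z - fine (\int[Q]_y (f y)%:E))))%:E).

Definition convex_on_0b (R : realType) (psi : R -> R) (b : \bar R) : Prop :=
  forall x y t : R, (0 <= x)%R -> x%:E < b -> (0 <= y)%R -> y%:E < b ->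
    (0 <= t <= 1)%R ->
    (psi (t * x + (1 - t) * y) <= t * psi x + (1 - t) * psi y)%R.

(** psi'(0) = 0, as the (right) derivative at the endpoint 0 of [0,b). *)
Definition right_deriv0_is0 (R : realType) (psi : R -> R) : Prop :=
  ((psi h - psi 0) / h @[h --> 0^'+] --> 0)%R.

Definition legendre_dual (R : realType) (psi : R -> R) (b : \bar R) (x : R)
  : \bar R :=
  ereal_sup [set ((l * x - psi l)%R)%:E | l in
              [set l : R | (0 <= l)%R /\ l%:E < b]].

(** Inverse of psi^* on [0,oo) (generalized inverse:
    psi^{*-1}(y) = inf { x >= 0 | psi^*(x) > y }). *)
Definition legendre_dual_inv (R : realType) (psi : R -> R) (b : \bar R)
  (y : \bar R) : \bar R :=
  ereal_inf [set x%:E | x in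
              [set x : R | (0 <= x)%R /\ y < legendre_dual psi b x]].

Definition dataset d dS (Om : measurableType d)
  (S : measurableType dS) (m : nat) (X : 'I_m -> {mfun Om >-> S}) (w : Om)
  : m.-tuple S := [tuple X i w | i < m].

Definition dist_exp_risk (R : realType) dS dW (S : measurableType dS)
  (W : measurableType dW) (K : nat) (n : 'I_K -> nat)
  (pi : 'I_K -> probability S R) (loss : S * W -> R) (w : W) : \bar R :=
  \sum_(k < K) (((n k)%:R / (\sum_(j < K) n j)%:R)%R)%:E *
               \int[pi k]_s (loss (s, w))%:E.

Definition dist_emp_risk (R : realType) dS dW (S : measurableType dS)
  (W : measurableType dW) (K : nat) (n : 'I_K -> nat)
  (data : forall k : 'I_K, 'I_(n k) -> S) (loss : S * W -> R) (w : W) : R :=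
  (\sum_(k < K) ((n k)%:R / (\sum_(j < K) n j)%:R) *
     ((n k)%:R^-1 * \sum_(i < n k) loss (data k i, w)))%R.

Definition gen_error (R : realType) d dS dW (Om : measurableType d)
  (S : measurableType dS) (W : measurableType dW) (P : probability Om R)
  (K : nat) (n : 'I_K -> nat) (pi : 'I_K -> probability S R)
  (loss : S * W -> R) (X : forall k : 'I_K, 'I_(n k) -> {mfun Om >-> S})
  (What : {mfun Om >-> W}) : \bar R :=
  \int[P]_w (dist_exp_risk n pi loss (What w) -
             (dist_emp_risk (fun k i => X k i w) loss (What w))%:E).

Definition gen_sigma d (Om : measurableType d) (G : set (set Om)) :=
  <<s G >>.

Definition prod_prob (R : realType) d1 d2 (T1 : measurableType d1)
  (T2 : measurableType d2) (p : probability T1 R) (q : probability T2 R)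
  : probability (T1 * T2)%type R := (p \x q)%E.

From HB Require Import structures.
From mathcomp Require Import all_boot all_order all_algebra.
From mathcomp Require Import all_classical all_reals all_analysis.
From mathcomp Require Import measurable_realfun.
From mathcomp Require Import ring lra.
Import Order.TTheory GRing.Theory Num.Theory.
Local Open Scope classical_set_scope.
Local Open Scope ring_scope.
Local Open Scope ereal_scope.

(** For a sample [S_{k,i}], let [J] be the joint law of [(S_{k,i}, W^)] and
    [Q = pi_k (x) P_{W^}] the product of its marginals, so that
    [D(J || Q) = I(S_{k,i}; W^)].  The Donsker-Varadhan inequality
    [E_J h <= D(J || Q) + log E_Q e^h], applied to [h = l (loss - E_Q loss)],
    gives [l (E_J loss - E_Q loss) <= I + Lambda_k(l) <= I + psi_{k+}(l)] for
    every [l] in [[0, b_{k+})], hence [E_J loss - E_Q loss <= psi_{k+}^{*-1}(I)];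
    [-l] and [psi_{k-}] give the other side.  (The same inequality at one
    [l > 0] makes the loss [J]-integrable.)  Since [n_k/n * 1/n_k = 1/n], the
    generalization error is the average over all [(k, i)] of
    [E_Q loss - E_J loss].  Only the marginal laws of the samples enter. *)

Lemma fin_num_integral_integrable d (T : measurableType d) (R : realType)
    (mu : {measure set T -> \bar R}) (f : T -> \bar R) :
  measurable_fun setT f -> \int[mu]_x f x \is a fin_num ->
  mu.-integrable setT f.
Proof.
move=> mf; rewrite integralE fin_numB => /andP[fin_pos fin_neg].
apply/integrableP; split => //.
rewrite (_ : (fun x => `|f x|) = f^\+ \+ f^\-); last by rewrite -fune_abse.
rewrite ge0_integralD//; [|exact: measurable_funepos|exact: measurable_funeneg].
by rewrite lte_add_pinfty// ltey_eq ?fin_pos ?fin_neg.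
Qed.

Lemma neg_mul_ln_le1 (R : realType) (x : R) : (0 < x)%R -> (- (x * ln x) <= 1)%R.
Proof.
move=> x_gt0; have := expR_ge1Dx (- ln x); rewrite expRN lnK// => le_inv.
have : (x * (1 - ln x) <= x * x^-1)%R by rewrite ler_pM2l.
by rewrite mulfV ?gt_eqF//; nra.
Qed.

Section radon_nikodym_density.
Context {d} {T : measurableType d} {R : realType} {J Q : probability T R}.
Hypothesis JQ : J `<< Q.

Local Notation RN := (Radon_Nikodym_SigmaFinite.f J Q).
Let g z := fine (RN z).

Let RNE z : RN z = (g z)%:E.
Proof. by rewrite /g fineK// Radon_Nikodym_SigmaFinite.f_fin_num. Qed.

Let g_ge0 z : (0 <= g z)%R.
Proof. by rewrite -lee_fin -RNE Radon_Nikodym_SigmaFinite.f_ge0. Qed.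

Let measurable_RN : measurable_fun setT RN.
Proof. exact: measurable_int (Radon_Nikodym_SigmaFinite.f_integrable JQ). Qed.

Let measurable_g : measurable_fun setT g.
Proof. exact: measurableT_comp measurable_RN. Qed.

Let measurable_ln_g : measurable_fun setT (fun z => (ln (g z))%:E).
Proof. exact/measurable_EFinP/measurableT_comp. Qed.

Let g_le0 := [set z | (g z <= 0)%R].

Let measurable_g_le0 : measurable g_le0.
Proof.
rewrite -[g_le0]setTI.
exact: (@measurable_fun_ler _ _ R setT g (cst 0%R) measurable_g (measurable_cst _)
  measurableT [set true]).
Qed.

Let J_g_le0 : J g_le0 = 0.
Proof.
rewrite (Radon_Nikodym_SigmaFinite.f_integral JQ measurable_g_le0).
apply: integral0_eq => z /= gz0.
by rewrite RNE; congr EFin; apply/eqP; rewrite eq_le gz0 g_ge0.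
Qed.

Lemma KL_ln_density : KL J Q = \int[J]_z (ln (g z))%:E.
Proof.
rewrite /KL; case: pselect => // ?.
have mlneRN : measurable_fun setT (fun z => lne (RN z)).
  rewrite (_ : (fun z => lne (RN z)) =
    (fun z => if (g z <= 0)%R then -oo else (ln (g z))%:E)); last first.
    by apply/funext => z; rewrite RNE.
  apply: (measurable_fun_if measurableT
    (@measurable_fun_ler _ _ R setT g (cst 0%R) measurable_g (measurable_cst _))) => //.
  exact: measurable_funS measurable_ln_g.
apply: (ae_eq_integral (fun z => (ln (g z))%:E)) => //.
exists g_le0; split => //.
by move=> z /= /not_implyP[_]; rewrite RNE /=; case: ifPn.
Qed.

Lemma ln_density_integrable : KL J Q \is a fin_num ->
  J.-integrable setT (fun z => (ln (g z))%:E).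
Proof. by rewrite KL_ln_density; exact: fin_num_integral_integrable. Qed.

(* [E_J (ln g)^- = E_Q (g (ln g)^-) <= 1] since [- x ln x <= 1]. *)
Lemma KL_abs_cont_neqNy : KL J Q != -oo.
Proof.
rewrite KL_ln_density integralE.
have : \int[J]_z (fun z => (ln (g z))%:E)^\- z < +oo.
  rewrite -(Radon_Nikodym_SigmaFinite.change_of_variables JQ _ measurableT
    (measurable_funeneg measurable_ln_g)); last by move=> z; rewrite funeneg_ge0.
  apply: (@le_lt_trans _ _ (\int[Q]_z (cst 1 z))); last first.
    by rewrite integral_cst//= probability_setT mule1 ltry.
  apply: ge0_le_integral => //.
  - by move=> z _; rewrite mule_ge0 ?funeneg_ge0// Radon_Nikodym_SigmaFinite.f_ge0.
  - exact: emeasurable_funM (measurable_funeneg measurable_ln_g) measurable_RN.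
  move=> z _; rewrite RNE funenegE -EFin_max -EFinM lee_fin.
  have := g_ge0 z; rewrite le_eqVlt => /orP[/eqP <-|gz0]; first by rewrite mulr0.
  have [ln_ge0|ln_lt0] := leP 0%R (ln (g z)).
    by rewrite (max_idPr _) ?mul0r// oppr_le0.
  rewrite (max_idPl _); last by rewrite oppr_ge0 ltW.
  by rewrite mulNr mulrC neg_mul_ln_le1.
set pos := \int[J]_z _^\+ z; set neg := \int[J]_z _^\- z.
have : 0 <= pos by apply: integral_ge0 => z _; rewrite funepos_ge0.
have : 0 <= neg by apply: integral_ge0 => z _; rewrite funeneg_ge0.
by case: pos => [x| |]; case: neg => [y| |].
Qed.

Section donsker_varadhan.
Context {h : T -> R} {c : R}.
Hypotheses (measurable_h : measurable_fun setT h)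
  (integral_expR_h : \int[Q]_z (expR (h z))%:E <= (expR c)%:E).

(* [e^x >= 1 + x] at [x = h - ln g - c] gives [h <= ln g + phi + c - 1]
   pointwise, and [E_J phi = E_Q (g phi) <= e^-c E_Q e^h <= 1]. *)
Let phi z := expR (h z - ln (g z) - c).

Let measurable_phi : measurable_fun setT phi.
Proof.
apply: measurableT_comp => //; apply: measurable_funB => //.
apply: measurable_funB measurable_h _.
exact: measurableT_comp measurable_g.
Qed.

Let integral_phi_le1 : \int[J]_z (phi z)%:E <= 1.
Proof.
rewrite -(Radon_Nikodym_SigmaFinite.change_of_variables JQ) //; last 2 first.
- by move=> z; rewrite lee_fin expR_ge0.
- exact/measurable_EFinP.
have mexph : measurable_fun setT (fun z => (expR (h z))%:E).
  exact/measurable_EFinP/measurableT_comp.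
apply: (@le_trans _ _ (\int[Q]_z ((expR (- c))%:E * (expR (h z))%:E))).
  apply: ge0_le_integral => //.
  - by move=> z _; rewrite RNE -EFinM lee_fin mulr_ge0 ?expR_ge0.
  - by apply: emeasurable_funM => //; exact/measurable_EFinP.
  - exact: emeasurable_funM.
  move=> z _; rewrite RNE -!EFinM lee_fin.
  have := g_ge0 z; rewrite le_eqVlt => /orP[/eqP <-|gz0].
    by rewrite mulr0 mulr_ge0 ?expR_ge0.
  by rewrite /phi -{2}(lnK gz0) -!expRD addrAC subrK addrC.
rewrite (ge0_integralZl_EFin _ _ _ mexph) ?expR_ge0//.
rewrite (@le_trans _ _ ((expR (- c))%:E * (expR c)%:E))//.
  by rewrite lee_wpmul2l ?lee_fin ?expR_ge0.
by rewrite -EFinM -expRD addNr expR0.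
Qed.

Let phi_integrable : J.-integrable setT (fun z => (phi z)%:E).
Proof.
apply/integrableP; split; first exact/measurable_EFinP.
under eq_integral do rewrite gee0_abs ?lee_fin ?expR_ge0//.
by rewrite (le_lt_trans integral_phi_le1) ?ltry.
Qed.

Let majorant z := (ln (g z) + phi z + (c - 1))%R.

Let le_majorant z : (h z <= majorant z)%R.
Proof. by have := expR_ge1Dx (h z - ln (g z) - c); rewrite /majorant /phi; lra. Qed.

Let majorantE : (fun z => (majorant z)%:E) =
  (fun z => (ln (g z))%:E + (phi z)%:E + cst (c - 1)%:E z).
Proof. by apply/funext => z; rewrite /majorant !EFinD. Qed.

Let majorant_integrable : KL J Q \is a fin_num ->
  J.-integrable setT (fun z => (majorant z)%:E).
Proof.
move=> KLfin; rewrite majorantE.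
apply: integrableD => //; last exact: finite_measure_integrable_cst.
exact: integrableD (ln_density_integrable KLfin) phi_integrable.
Qed.

Let integral_majorant_le : KL J Q \is a fin_num ->
  \int[J]_z (majorant z)%:E <= KL J Q + c%:E.
Proof.
move=> KLfin; rewrite majorantE integralD //; last 2 first.
- exact: integrableD (ln_density_integrable KLfin) phi_integrable.
- exact: finite_measure_integrable_cst.
rewrite integralD //; [|exact: ln_density_integrable].
rewrite integral_cst//= probability_setT mule1 -KL_ln_density.
have -> : KL J Q + c%:E = KL J Q + 1 + (c - 1)%:E.
  by rewrite -(fineK KLfin) -!EFinD; congr EFin; ring.
by rewrite !leeD.
Qed.

Lemma Donsker_Varadhan : KL J Q \is a fin_num -> J.-integrable setT (EFin \o h) ->
  \int[J]_z (h z)%:E <= KL J Q + c%:E.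
Proof.
move=> KLfin inth; apply: le_trans (integral_majorant_le KLfin).
apply: le_integral => //; first exact: majorant_integrable.
by move=> z _; rewrite lee_fin le_majorant.
Qed.

Lemma integrable_of_exp_moment (f : T -> R) (l a : R) :
  measurable_fun setT f -> (forall z, (0 <= f z)%R) -> (0 < l)%R ->
  (forall z, (l * f z - a <= h z)%R) -> KL J Q \is a fin_num ->
  J.-integrable setT (EFin \o f).
Proof.
move=> mf f_ge0 l_gt0 le_h KLfin.
pose bound z := (l^-1 * (majorant z + a))%R.
have int_bound : J.-integrable setT (EFin \o bound).
  rewrite (_ : EFin \o bound = fun z => l^-1%:E * ((majorant z)%:E + cst a%:E z)).
    apply: integrableZl => //; apply: integrableD => //.
    - exact: majorant_integrable.
    - exact: finite_measure_integrable_cst.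
  by apply/funext => z; rewrite /bound /= EFinM EFinD.
apply: le_integrable int_bound => //; first exact/measurable_EFinP.
move=> z _; have f_le : (f z <= bound z)%R.
  by rewrite /bound ler_pdivlMl//; have := le_h z; have := le_majorant z; lra.
by rewrite /= !ger0_norm ?(le_trans (f_ge0 z)).
Qed.

End donsker_varadhan.
End radon_nikodym_density.

Section KL.
Context {d} {T : measurableType d} {R : realType} {J Q : probability T R}.

Lemma abs_cont_of_KL_fin_num : KL J Q \is a fin_num -> J `<< Q.
Proof. by rewrite /KL; case: pselect. Qed.

Lemma KL_neqNy : KL J Q != -oo.
Proof.
have [JQ|] := pselect (J `<< Q); first exact: KL_abs_cont_neqNy.
by rewrite /KL; case: pselect.
Qed.

End KL.

Section donsker_varadhan_cgf.
Context {d} {T : measurableType d} {R : realType} {J Q : probability T R}.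
Variable f : T -> R.
Hypothesis measurable_f : measurable_fun setT f.

Let mean := fine (\int[Q]_z (f z)%:E).

Lemma integral_expR_le_of_cgf (l c : R) : cgf Q f l <= c%:E ->
  \int[Q]_z (expR (l * (f z - mean)))%:E <= (expR c)%:E.
Proof.
rewrite /cgf -/mean; set Z := \int[Q]_z _.
have : 0 <= Z by apply: integral_ge0 => z _; rewrite lee_fin expR_ge0.
case: Z => [r| |] //= r_ge0; rewrite lee_fin.
case: ifPn => [r_le0 _|]; first exact: le_trans r_le0 (expR_ge0 _).
by rewrite -ltNge => r_gt0 ln_le; rewrite -(lnK r_gt0) ler_expR.
Qed.

Let measurable_centered (l : R) : measurable_fun setT (fun z => l * (f z - mean))%R.
Proof. by apply: measurable_funM => //; exact: measurable_funB. Qed.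

Lemma integrable_of_cgf_le (l c : R) :
  (forall z, (0 <= f z)%R) -> (0 < l)%R -> cgf Q f l <= c%:E ->
  KL J Q \is a fin_num -> J.-integrable setT (EFin \o f).
Proof.
move=> f_ge0 l_gt0 cgf_le KLfin.
apply: (integrable_of_exp_moment (abs_cont_of_KL_fin_num KLfin)
  (measurable_centered l) (integral_expR_le_of_cgf _ _ cgf_le) f l (l * mean)) => //.
by move=> z; rewrite mulrBr.
Qed.

Lemma Donsker_Varadhan_cgf (l c : R) : cgf Q f l <= c%:E ->
  KL J Q \is a fin_num -> J.-integrable setT (EFin \o f) ->
  (l * (fine (\int[J]_z (f z)%:E) - mean) <= fine (KL J Q) + c)%R.
Proof.
move=> cgf_le KLfin intf.
have centeredE : (fun z => (l * (f z - mean))%:E) =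
    (fun z => l%:E * ((f z)%:E - mean%:E)).
  by apply/funext => z; rewrite EFinM EFinB.
have int_centered : J.-integrable setT (fun z => (f z)%:E - mean%:E).
  exact: integrableB intf (finite_measure_integrable_cst _ _ _).
have int_h : J.-integrable setT (fun z => (l * (f z - mean))%:E).
  by rewrite centeredE; exact: integrableZl.
have := Donsker_Varadhan (abs_cont_of_KL_fin_num KLfin) (measurable_centered l)
  (integral_expR_le_of_cgf _ _ cgf_le) KLfin int_h.
rewrite centeredE integralZl// integralB//; last exact: finite_measure_integrable_cst.
rewrite (integral_cst J measurableT)/= probability_setT mule1.
rewrite -(fineK (integrable_fin_num measurableT intf)) -(fineK KLfin).
by rewrite -EFinB -EFinM -EFinD lee_fin.
Qed.

End donsker_varadhan_cgf.

Section legendre_dual_inv.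
Context {R : realType} (psi : R -> R) (b : \bar R).

Lemma legendre_dual_inv_ge0 y : 0 <= legendre_dual_inv psi b y.
Proof. by apply: le_ereal_inf_tmp => _ [x [x_ge0 _] <-]; rewrite lee_fin. Qed.

Lemma legendre_dual_inv_pinfty : legendre_dual_inv psi b +oo = +oo.
Proof. by apply/ereal_inf_pinfty => y [x [_ +] _]; rewrite ltNge leey. Qed.

Lemma le_legendre_dual_inv (e y : R) :
  (forall l, (0 <= l)%R -> l%:E < b -> (l * e <= y + psi l)%R) ->
  e%:E <= legendre_dual_inv psi b y%:E.
Proof.
move=> le_e; apply: le_ereal_inf_tmp => _ [x [x_ge0 y_lt] <-].
have [_ [l [l_ge0 l_lt] <-]] := ereal_sup_gt y_lt; rewrite lte_fin => y_lt_l.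
have := le_e l l_ge0 l_lt; rewrite lee_fin.
move: l_ge0 y_lt_l; rewrite le_eqVlt => /orP[/eqP <-|l_gt0] y_lt_l le_l.
  by move: y_lt_l le_l; rewrite !mul0r; lra.
by apply: ltW; rewrite -(ltr_pM2l l_gt0); lra.
Qed.

End legendre_dual_inv.

Lemma KL_le_legendre_dual_inv d (T : measurableType d) (R : realType)
    (J Q : probability T R) (f : T -> R) (psi : R -> R) (b : \bar R) (s : R) :
  measurable_fun setT f -> KL J Q \is a fin_num -> J.-integrable setT (EFin \o f) ->
  (forall l, (0 <= l)%R -> l%:E < b -> cgf Q f (s * l) <= (psi l)%:E) ->
  (s * (fine (\int[J]_z (f z)%:E) - fine (\int[Q]_z (f z)%:E)))%:E
    <= legendre_dual_inv psi b (KL J Q).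
Proof.
move=> mf KLfin intf cgf_le; rewrite -(fineK KLfin).
apply: le_legendre_dual_inv => l l_ge0 l_lt.
by rewrite mulrA (mulrC l); exact: Donsker_Varadhan_cgf (cgf_le l l_ge0 l_lt) KLfin intf.
Qed.

Lemma integrable_distribution d d' (T : measurableType d) (T' : measurableType d')
    (R : realType) (P : probability T R) (Z : {RV P >-> T'}) (f : T' -> \bar R) :
  measurable_fun setT f ->
  (distribution P Z).-integrable setT f <-> P.-integrable setT (f \o Z).
Proof.
move=> mf; have mabsf : measurable_fun setT (fun y => `|f y|).
  exact: measurableT_comp.
have integral_absE :=
  @ge0_integral_distribution _ _ _ _ _ P Z _ mabsf (fun y => abse_ge0 (f y)).
split=> /integrableP[_ fin]; apply/integrableP.
- by split; [exact: measurableT_comp|rewrite -integral_absE].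
- by split=> //; rewrite integral_absE.
Qed.

Lemma integral_prod_prob_loss {R : realType} {dO dS dW : measure_display}
    {Om : measurableType dO} {S : measurableType dS} {W : measurableType dW}
    (P : probability Om R) (loss : S * W -> R) (pi : probability S R)
    (Y : {mfun Om >-> W}) :
  measurable_fun setT loss -> (forall z, (0 <= loss z)%R) ->
  \int[prod_prob pi (distribution P Y)]_z (loss z)%:E =
  \int[P]_w \int[pi]_s (loss (s, Y w))%:E.
Proof.
move=> mloss loss_ge0.
have mEloss : measurable_fun setT (EFin \o loss) by exact/measurable_EFinP.
have Eloss_ge0 z : 0 <= (EFin \o loss) z by rewrite lee_fin.
rewrite /prod_prob (fubini_tonelli2 _ mEloss Eloss_ge0) ge0_integral_distribution//.
- exact: measurable_fun_fubini_tonelli_G.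
- by move=> y; apply: integral_ge0 => s _; rewrite lee_fin.
Qed.

Section mutual_info_bound.
Context {R : realType} {dO dS dW : measure_display} {Om : measurableType dO}
  {S : measurableType dS} {W : measurableType dW} {P : probability Om R}
  {loss : S * W -> R} { pi : probability S R }
  {X : {mfun Om >-> S} } {Y : {mfun Om >-> W} }.
Hypotheses (measurable_loss : measurable_fun setT loss)
  (loss_ge0 : forall z, (0 <= loss z)%R)
  (law_X : forall A, measurable A -> P (X @^-1` A) = pi A).

Let Q := prod_prob pi (distribution P Y).
Let marginals : probability (S * W)%type R := (distribution P X \x distribution P Y)%E.
Let joint := distribution P (pairRV X Y).

Let measurable_Eloss : measurable_fun setT (EFin \o loss).
Proof. exact/measurable_EFinP. Qed.

(* The two products agree on measurable sets only, hence on integrals. *)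
Let integral_marginals (F : S * W -> \bar R) :
  \int[marginals]_z F z = \int[Q]_z F z.
Proof.
apply: eq_measure_integral => A mA _.
apply: eq_measure_integral => B mB _.
by rewrite /= /distribution /pushforward law_X.
Qed.

Let cgf_marginals l : cgf marginals loss l = cgf Q loss l.
Proof. by rewrite /cgf !integral_marginals. Qed.

Let joint_integrableE : joint.-integrable setT (EFin \o loss) <->
  P.-integrable setT (fun w => (loss (X w, Y w))%:E).
Proof. exact: integrable_distribution. Qed.

Lemma mutual_info_integrable (psi : R -> R) (b : \bar R) :
  mutual_info P X Y \is a fin_num -> 0 < b ->
  (forall l, (0 <= l)%R -> l%:E < b -> cgf Q loss l <= (psi l)%:E) ->
  P.-integrable setT (fun w => (loss (X w, Y w))%:E).
Proof.
move=> MIfin b_gt0 cgf_le; apply/joint_integrableE.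
have [l [l_gt0 l_lt]] : exists l : R, (0 < l)%R /\ l%:E < b.
  case: b b_gt0 {cgf_le} => [r| |] //; last by exists 1%R; rewrite ltry.
  by rewrite lte_fin => r_gt0; exists (r / 2)%R; rewrite lte_fin; split; lra.
apply: (integrable_of_cgf_le (J := joint) (Q := marginals) _ measurable_loss l (psi l))
  => //.
by rewrite cgf_marginals; exact: cgf_le (ltW l_gt0) l_lt.
Qed.

Lemma mutual_info_le_legendre_dual_inv (psi : R -> R) (b : \bar R) (s : R) :
  mutual_info P X Y \is a fin_num ->
  (forall l, (0 <= l)%R -> l%:E < b -> cgf Q loss (s * l) <= (psi l)%:E) ->
  P.-integrable setT (fun w => (loss (X w, Y w))%:E) ->
  (s * (fine (\int[P]_w (loss (X w, Y w))%:E) - fine (\int[Q]_z (loss z)%:E)))%:E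
    <= legendre_dual_inv psi b (mutual_info P X Y).
Proof.
move=> MIfin cgf_le /joint_integrableE int_joint.
rewrite -(ge0_integral_distribution (pairRV X Y) measurable_Eloss); last first.
  by move=> z; rewrite lee_fin.
rewrite -integral_marginals.
apply: KL_le_legendre_dual_inv => // l l_ge0 l_lt.
by rewrite cgf_marginals; exact: cgf_le.
Qed.

End mutual_info_bound.

Lemma sum_weighted_means_sub (R : numFieldType) (K : nat) (n : 'I_K -> nat)
    (a : 'I_K -> R) (e : forall k, 'I_(n k) -> R) :
  (\sum_(k < K) (n k)%:R / (\sum_(j < K) n j)%:R * a k
   - \sum_(k < K) \sum_(i < n k) (n k)%:R / (\sum_(j < K) n j)%:R / (n k)%:R * e k i
  = (\sum_(j < K) n j)%:R^-1 * \sum_(k < K) \sum_(i < n k) (a k - e k i))%R.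
Proof.
rewrite mulr_sumr -sumrB; apply: eq_bigr => k _.
rewrite sumrB sumr_const card_ord -mulr_sumr; set s := (\sum_(i < n k) e k i)%R.
have [nk0|nk_neq0] := eqVneq (n k) 0%N.
  have -> : s = 0%R by rewrite /s big1 // => -[i i_lt]; exfalso; rewrite nk0 in i_lt.
  by rewrite nk0 !mul0r mulr0n subr0 mulr0.
have N_neq0 : (\sum_(j < K) n j)%:R != 0%R :> R.
  by rewrite pnatr_eq0 -lt0n (bigD1 k)//= addn_gt0 lt0n nk_neq0.
rewrite -mulr_natr; field.
by rewrite N_neq0 pnatr_eq0.
Qed.

Lemma mean_sum_pinfty (R : realType) (K : nat) (n : 'I_K -> nat)
    (L : forall k, 'I_(n k) -> \bar R) (k0 : 'I_K) (i0 : 'I_(n k0)) :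
  (forall k i, 0 <= L k i) -> L k0 i0 = +oo ->
  ((\sum_(j < K) n j)%:R^-1)%:E * \sum_(k < K) \sum_(i < n k) L k i = +oo.
Proof.
move=> L_ge0 L0oo; have N_gt0 : (0 < \sum_(j < K) n j)%N.
  by rewrite (bigD1 k0)//= addn_gt0 (leq_ltn_trans (leq0n i0) (ltn_ord i0)).
have neqNy (x : \bar R) : 0 <= x -> x != -oo by case: x.
suff -> : \sum_(k < K) \sum_(i < n k) L k i = +oo.
  by rewrite gt0_muley ?lte_fin ?invr_gt0 ?ltr0n.
rewrite (bigD1 k0)//= (bigD1 i0)//= L0oo addye ?addye//.
- by apply/neqNy/sume_ge0 => k _; exact: sume_ge0.
- by apply/neqNy/sume_ge0.
Qed.

Lemma lee_mean_sum (R : realType) (K : nat) (n : 'I_K -> nat)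
    (x : forall k, 'I_(n k) -> R) (L : forall k, 'I_(n k) -> \bar R) :
  (forall k i, (x k i)%:E <= L k i) ->
  ((\sum_(j < K) n j)%:R^-1 * \sum_(k < K) \sum_(i < n k) x k i)%:E
    <= ((\sum_(j < K) n j)%:R^-1)%:E * \sum_(k < K) \sum_(i < n k) L k i.
Proof.
move=> x_le; rewrite EFinM -sumEFin lee_wpmul2l ?lee_fin ?invr_ge0//.
by apply: lee_sum => k _; rewrite -sumEFin; apply: lee_sum => i _.
Qed.

Lemma leeN_mean_sum (R : realType) (K : nat) (n : 'I_K -> nat)
    (x : forall k, 'I_(n k) -> R) (L : forall k, 'I_(n k) -> \bar R) :
  (forall k i, (- x k i)%:E <= L k i) ->
  - (((\sum_(j < K) n j)%:R^-1)%:E * \sum_(k < K) \sum_(i < n k) L k i)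
    <= ((\sum_(j < K) n j)%:R^-1 * \sum_(k < K) \sum_(i < n k) x k i)%:E.
Proof.
move=> Nx_le; rewrite leeNl -EFinN -mulrN -sumrN.
under [X in (_ * X)%R]eq_bigr do rewrite -sumrN.
exact: lee_mean_sum.
Qed.

Section generalization_error.
Context {R : realType} {dO dS dW : measure_display} {Om : measurableType dO}
  {S : measurableType dS} {W : measurableType dW} (P : probability Om R).
Variables (loss : S * W -> R) (K : nat) (n : 'I_K -> nat)
  (pi : 'I_K -> probability S R) (X : forall k : 'I_K, 'I_(n k) -> {mfun Om >-> S})
  (What : {mfun Om >-> W}).
Hypotheses (measurable_loss : measurable_fun setT loss)
  (loss_ge0 : forall z, (0 <= loss z)%R)
  (integrable_prod : forall k, (prod_prob (pi k) (distribution P What)).-integrable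
     setT (fun z => (loss z)%:E))
  (integrable_loss : forall k i, P.-integrable setT (fun w => (loss (X k i w, What w))%:E)).

Let weight k : R := ((n k)%:R / (\sum_(j < K) n j)%:R)%R.
Let prod_mean k := fine (\int[prod_prob (pi k) (distribution P What)]_z (loss z)%:E).
Let sample_mean k i := fine (\int[P]_w (loss (X k i w, What w))%:E).
Let risk k w := \int[pi k]_s (loss (s, What w))%:E.

Let integral_risk k : \int[P]_w risk k w = (prod_mean k)%:E.
Proof.
rewrite -integral_prod_prob_loss// fineK//.
exact: integrable_fin_num (integrable_prod k).
Qed.

Let integrable_risk k : P.-integrable setT (risk k).
Proof.
have risk_ge0 w : 0 <= risk k w by apply: integral_ge0 => s _; rewrite lee_fin.
apply/integrableP; split.
  have Eloss_ge0 z : 0 <= (EFin \o loss) z by rewrite lee_fin.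
  apply: (measurableT_comp (measurable_fun_fubini_tonelli_G (m1 := pi k) _ _ Eloss_ge0)).
  - exact/measurable_EFinP.
  - exact: measurable_funP.
under eq_integral do rewrite gee0_abs//.
by rewrite integral_risk ltry.
Qed.

Let integrable_exp_risk :
  P.-integrable setT (fun w => dist_exp_risk n pi loss (What w)).
Proof.
apply: integrable_sum => // k _.
exact: integrableZl (integrable_risk k).
Qed.

Let integral_exp_risk : \int[P]_w dist_exp_risk n pi loss (What w) =
  (\sum_(k < K) weight k * prod_mean k)%:E.
Proof.
rewrite integral_sum// => [|k]; last exact: integrableZl (integrable_risk k).
rewrite -sumEFin; apply: eq_bigr => k _.
by rewrite (integralZl measurableT (integrable_risk k)) integral_risk.
Qed.

Let emp_riskE w : (dist_emp_risk (fun k i => X k i w) loss (What w))%:E =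
  \sum_(k < K) \sum_(i < n k) (weight k / (n k)%:R)%:E * (loss (X k i w, What w))%:E.
Proof.
rewrite -sumEFin; apply: eq_bigr => k _.
by rewrite mulrA mulr_sumr -sumEFin; apply: eq_bigr => i _; rewrite EFinM.
Qed.

Let integrable_emp_risk :
  P.-integrable setT (fun w => (dist_emp_risk (fun k i => X k i w) loss (What w))%:E).
Proof.
under eq_fun do rewrite emp_riskE.
apply: integrable_sum => // k _; apply: integrable_sum => // i _.
exact: integrableZl (integrable_loss k i).
Qed.

Let integral_emp_risk :
  \int[P]_w (dist_emp_risk (fun k i => X k i w) loss (What w))%:E =
  (\sum_(k < K) \sum_(i < n k) weight k / (n k)%:R * sample_mean k i)%:E.
Proof.
under eq_integral do rewrite emp_riskE.
rewrite integral_sum// => [|k]; last first.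
  apply: integrable_sum => // i _; exact: integrableZl (integrable_loss k i).
rewrite -sumEFin; apply: eq_bigr => k _.
rewrite integral_sum// => [|i]; last exact: integrableZl (integrable_loss k i).
rewrite -sumEFin; apply: eq_bigr => i _.
rewrite (integralZl measurableT (integrable_loss k i)) [RHS]EFinM fineK//.
exact: integrable_fin_num.
Qed.

Lemma gen_error_mean : gen_error P pi loss X What =
  ((\sum_(j < K) n j)%:R^-1 *
   \sum_(k < K) \sum_(i < n k) (prod_mean k - sample_mean k i))%:E.
Proof.
rewrite /gen_error integralB// integral_exp_risk integral_emp_risk -EFinB.
by rewrite sum_weighted_means_sub.
Qed.

End generalization_error.
Theorem theorem2 (R : realType) (dO dS dW : measure_display)
  (Om : measurableType dO) (S : measurableType dS) (W : measurableType dW)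
  (P : probability Om R)
  (loss : S * W -> R)
  (K : nat) (n : 'I_K -> nat)
  (pi : 'I_K -> probability S R)
  (X : forall k : 'I_K, 'I_(n k) -> {mfun Om >-> S})
  (kappa : forall k : 'I_K, R.-pker (n k).-tuple S ~> W)
  (Wk : 'I_K -> {mfun Om >-> W})
  (fusion : R.-pker K.-tuple W ~> W)
  (What : {mfun Om >-> W})
  (bp bm : 'I_K -> \bar R) (psip psim : 'I_K -> R -> R) :
  (* nonnegative (measurable) loss *)
  measurable_fun setT loss ->
  (forall z, (0 <= loss z)%R) ->
  (* S_{k,i} ~ pi_k *)
  (forall k i A, measurable A -> P (X k i @^-1` A) = pi k A) ->
  (* all samples S_{k,i} are mutually independent *)
  (forall A : {k : 'I_K & 'I_(n k)} -> set S, (forall j, measurable (A j)) ->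
     P (\big[setI/setT]_j (X (projT1 j) (projT2 j) @^-1` A j)) =
     \prod_j P (X (projT1 j) (projT2 j) @^-1` A j)) ->
  (* user k: W_k ~ P_{W_k | S_k} = kappa k, given all data and the other users *)
  (forall k A E, measurable A ->
     gen_sigma [set F | (exists j i B, measurable B /\ F = X j i @^-1` B) \/
                        (exists j B, j != k /\ measurable B /\ F = Wk j @^-1` B)] E ->
     P (Wk k @^-1` A `&` E) = \int[P]_(w in E) kappa k (dataset (X k) w) A) ->
  (* fusion: W^ ~ P_{W^ | W_1, ..., W_K} = fusion, given all data and all W_k *)
  (forall B E, measurable B ->
     gen_sigma [set F | (exists j i C, measurable C /\ F = X j i @^-1` C) \/
                        (exists j C, measurable C /\ F = Wk j @^-1` C)] E ->
     P (What @^-1` B `&` E) = \int[P]_(w in E) fusion [tuple Wk j w | j < K] B) ->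
  (* l(S^_k, W^-) has a finite mean under pi_k (x) P_{W^} (so Lambda_k is defined) *)
  (forall k, (prod_prob (pi k) (distribution P What)).-integrable setT
               (fun z => (loss z)%:E)) ->
  (* b_{k+-} in (0, oo] *)
  (forall k, 0 < bp k) -> (forall k, 0 < bm k) ->
  (* psi_{k+-} : [0, b_{k+-}) -> R convex, psi(0) = psi'(0) = 0 *)
  (forall k, convex_on_0b (psip k) (bp k)) ->
  (forall k, convex_on_0b (psim k) (bm k)) ->
  (forall k, psip k 0%R = 0%R) -> (forall k, psim k 0%R = 0%R) ->
  (forall k, right_deriv0_is0 (psip k)) ->
  (forall k, right_deriv0_is0 (psim k)) ->
  (* Lambda_k(l) <= psi_{k+}(l) on [0, b_{k+}) *)
  (forall k (l : R), (0 <= l)%R -> l%:E < bp k ->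
     cgf (prod_prob (pi k) (distribution P What)) loss l <= (psip k l)%:E) ->
  (* Lambda_k(l) <= psi_{k-}(-l) on (-b_{k-}, 0] *)
  (forall k (l : R), (l <= 0)%R -> (- l)%:E < bm k ->
     cgf (prod_prob (pi k) (distribution P What)) loss l <= (psim k (- l))%:E) ->
  - ((((\sum_(k < K) n k)%:R)^-1)%R%:E *
      \sum_(k < K) \sum_(i < n k)
        legendre_dual_inv (psip k) (bp k) (mutual_info P (X k i) What))
    <= gen_error P pi loss X What /\
  gen_error P pi loss X What <=
    (((\sum_(k < K) n k)%:R)^-1)%R%:E *
      \sum_(k < K) \sum_(i < n k)
        legendre_dual_inv (psim k) (bm k) (mutual_info P (X k i) What).
Proof.
move=> measurable_loss loss_ge0 law_X _ _ _ integrable_prod bp_gt0 _ _ _ _ _ _ _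
  cgf_le_psip cgf_le_psim.
have [MIfin|/existsNP[k0 /existsNP[i0 /negP MI_nfin]]] :=
  pselect (forall k i, mutual_info P (X k i) What \is a fin_num); last first.
  have MI_pinfty : mutual_info P (X k0 i0) What = +oo.
    have : mutual_info P (X k0 i0) What != -oo by exact: KL_neqNy.
    by move: MI_nfin; case: (mutual_info _ _ _).
  rewrite !(@mean_sum_pinfty _ _ _ _ k0 i0) ?MI_pinfty ?legendre_dual_inv_pinfty//.
  - by rewrite leNye leey.
  - by move=> k i; exact: legendre_dual_inv_ge0.
  - by move=> k i; exact: legendre_dual_inv_ge0.
have integrable_loss k i : P.-integrable setT (fun w => (loss (X k i w, What w))%:E).
  exact: mutual_info_integrable measurable_loss loss_ge0 (law_X k i) _ _ (MIfin k i)
    (bp_gt0 k) (cgf_le_psip k).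
rewrite gen_error_mean//; split.
- apply: leeN_mean_sum => k i.
  rewrite opprB -[X in X%:E]mul1r.
  apply: (mutual_info_le_legendre_dual_inv measurable_loss loss_ge0 (law_X k i))
    => // l l_ge0 l_lt.
  by rewrite mul1r; exact: cgf_le_psip.
- apply: lee_mean_sum => k i.
  rewrite -opprB -[X in X%:E]mulN1r.
  apply: (mutual_info_le_legendre_dual_inv measurable_loss loss_ge0 (law_X k i))
    => // l l_ge0 l_lt.
  by rewrite mulN1r; have := cgf_le_psim k (- l)%R; rewrite opprK oppr_le0; exact.
Qed.
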